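(* Let $P$ be a finite $(3+1)$-free poset and let $v(P)=\{v(a):a\in P\}$ be its poset of views. Then there is a listing $(S_1,S_2,\dots,S_k)$ of the co-connected components of $v(P)$ such that for every $x\in S_i$ and every $y\in S_{i+1}$ we have $x<y$ in $v(P)$. Moreover, the preimages $v^{-1}(S_i)$, $i=1,\dots,k$, are exactly the tops of tangles, the bottoms of tangles, and the clone sets of $P$.
   Context: A poset $P$ is $(3+1)$-free if there are no $a,b,c,d\in P$ with $a<b<c$ and $d$ incomparable to each of $a,b,c$. For $a\in P$ let $D_a=\{x\in P:x<a\}$, $U_a=\{x\in P:x>a\}$. The view of $a$ is $v(a)=(D_a,P\setminus U_a)$, and the set $v(P)$ of views is partially ordered by $v(a)\le v(b)$ iff $D_a\subseteq D_b$ and $U_a\supseteq U_b$. A co-connected component of a poset is a connected component of its incomparability graph. Write $a\mathrel{\top}b$ if neither of $D_a,D_b$ contains the other, $a\mathrel{\bot}b$ if neither of $U_a,U_b$ contains the other, and $a\approx b$ if $D_a=D_b$ and $U_a=U_b$. A top of a tangle is a subset $A\subseteq P$ with $|A|\ge2$ that is a connected component of the graph on $P$ with edges $\{a,b\}$ for $a\mathrel{\top}b$; a bottom of a tangle is defined in the same way using $\bot$. A top $A$ and bottom $B$ are matched if there are distinct $a_1,a_2\in A$, $b_1,b_2\in B$ with $b_1<a_1$, $b_2<a_2$ and the pairs $\{a_1,a_2\},\{b_1,b_2\},\{b_1,a_2\},\{b_2,a_1\}$ incomparable; in a $(3+1)$-free poset this is a perfect matching between tops and bottoms of tangles, and a tangle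 is a matched pair $(A,B)$. A clone set of $P$ is an equivalence class of $\approx$ restricted to the vertices of $P$ not lying in any top or bottom of a tangle. *)

From mathcomp Require Import all_boot all_order.
Set Implicit Arguments. Unset Strict Implicit. Unset Printing Implicit Defensive.
Import Order.Theory.
Local Open Scope order_scope.

Section PosetDefs.
Context {disp : Order.disp_t} {T : finPOrderType disp}.

Definition incomp (x y : T) : bool := ~~ (x >=< y).

Definition free31 : Prop :=
  ~ exists a b c d : T,
      [/\ a < b, b < c, incomp d a, incomp d b & incomp d c].

Definition Dset (a : T) : {set T} := [set x | x < a].
Definition Uset (a : T) : {set T} := [set x | a < x].

Definition view (a : T) : {set T} * {set T} := (Dset a, ~: Uset a).

Definition views : {set {set T} * {set T}} := [set view a | a : T].

(* order on views: (D,P\U) <= (D',P\U') iff D ⊆ D' and U ⊇ U' *)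
Definition vle (x y : {set T} * {set T}) : bool :=
  (x.1 \subset y.1) && (~: y.2 \subset ~: x.2).
Definition vlt (x y : {set T} * {set T}) : bool := (x != y) && vle x y.

Definition vinc_edge (x y : {set T} * {set T}) : bool :=
  [&& x \in views, y \in views, ~~ vle x y & ~~ vle y x].

Definition cocomponents : {set {set {set T} * {set T}}} :=
  [set [set y | connect vinc_edge x y] | x in views].

Definition topr (a b : T) : bool :=
  ~~ (Dset a \subset Dset b) && ~~ (Dset b \subset Dset a).
Definition botr (a b : T) : bool :=
  ~~ (Uset a \subset Uset b) && ~~ (Uset b \subset Uset a).
Definition approx (a b : T) : bool := (Dset a == Dset b) && (Uset a == Uset b).

Definition tops : {set {set T}} :=
  [set C in [set [set y | connect topr a y] | a : T] | 1 < #|C|].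
Definition bottoms : {set {set T}} :=
  [set C in [set [set y | connect botr a y] | a : T] | 1 < #|C|].

Definition untangled (a : T) : bool :=
  [forall A in tops, a \notin A] && [forall B in bottoms, a \notin B].

Definition clone_sets : {set {set T}} :=
  [set [set b | untangled b & approx a b] | a in [pred a | untangled a]].

Definition vpreim (S : {set {set T} * {set T}}) : {set T} :=
  [set a | view a \in S].

End PosetDefs.

From mathcomp Require Import all_boot all_order.
Import Order.Theory.
Local Open Scope order_scope.
Set Implicit Arguments. Unset Strict Implicit. Unset Printing Implicit Defensive.

(* In a (3+1)-free poset, for all a, b we have D_a \subset D_b or U_a \subset U_b:
   otherwise x < a < y with x \notin D_b, y \notin U_b, and b is incomparable to
   x, a and y.  Consequently v(a), v(b) are incomparable exactly when a ⊤ b or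
   a ⊥ b, and no vertex lies both in a top and in a bottom of a tangle.  So the
   co-component of v(a) is the image of the ⊤-component of a, of the
   ⊥-component of a, or just {v(a)} when a is untangled.  In any finite poset,
   elements of two distinct co-components are comparable, always in the same
   direction, so the co-components are linearly ordered. *)
Section NontrivialComponents.
Variables (U : finType) (e : rel U).

Definition nontrivial_components : {set {set U}} :=
  [set C in [set [set y | connect e a y] | a : U] | 1 < #|C|].

Lemma connect_neq_edge x y : connect e x y -> x != y -> exists z, e x z.
Proof.
case/connectP => [[|z p] /= xp ->]; first by rewrite eqxx.
by case/andP: xp => exz _ _; exists z.
Qed.

Hypotheses (e_sym : symmetric e) (e_irr : irreflexive e).

Lemma card_component_gt1 x : (1 < #|[set y | connect e x y]|) = [exists y, e x y].
Proof.
apply/card_gt1P/existsP => [[y [z [/[!inE] xy xz yz]]] | [y exy]].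
  have [exy|xy'] := eqVneq x y; last exact: connect_neq_edge xy xy'.
  by subst y; exact: connect_neq_edge xz yz.
exists x, y; rewrite !inE connect0 connect1 //; split=> //.
by apply: contraTneq exy => <-; rewrite e_irr.
Qed.

Lemma component_neighbour a c : connect e a c -> [exists b, e a b] = [exists b, e c b].
Proof.
move=> ac; rewrite -!card_component_gt1.
by under eq_finset => y do rewrite (same_connect (sym_connect_sym e_sym) ac).
Qed.

Lemma nontrivial_componentP X :
  reflect (exists2 a, [exists b, e a b] & X = [set y | connect e a y])
          (X \in nontrivial_components).
Proof.
rewrite inE; apply: (iffP andP) => [[/imsetP [a _ ->]] | [a ea ->]].
  by rewrite card_component_gt1 => ea; exists a.
by rewrite imset_f // card_component_gt1.
Qed.

Lemma notin_nontrivial_components a :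
  [forall C in nontrivial_components, a \notin C] = ~~ [exists b, e a b].
Proof.
apply/forall_inP/idP => [noC | nea C /nontrivial_componentP [c ec ->]].
  apply/negP => ea; suff /noC : [set y | connect e a y] \in nontrivial_components.
    by rewrite inE connect0.
  by apply/nontrivial_componentP; exists a.
by rewrite inE; apply: contra nea => ca; rewrite -(component_neighbour ca).
Qed.

End NontrivialComponents.

Section Cocomponents.
Variables (U : finType) (V : {set U}) (le : rel U).
Hypothesis le_trans : transitive le.

Definition incomp_edge : rel U :=
  fun x y => [&& x \in V, y \in V, ~~ le x y & ~~ le y x].

Definition cocomponent x : {set U} := [set y | connect incomp_edge x y].

Definition cocomponents_of : {set {set U}} := [set cocomponent x | x in V].

Lemma incomp_edge_sym : symmetric incomp_edge.
Proof. by move=> x y; rewrite /incomp_edge andbCA [~~ le _ _ && _]andbC. Qed.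

Let incomp_connect_sym := sym_connect_sym incomp_edge_sym.

Lemma cocomponent_id x : x \in cocomponent x.
Proof. by rewrite inE connect0. Qed.

Lemma cocomponent_eq x y z :
  z \in cocomponent x -> z \in cocomponent y -> cocomponent x = cocomponent y.
Proof.
rewrite !inE => xz yz; have xy : connect incomp_edge x y.
  by rewrite (connect_trans xz) // incomp_connect_sym.
by apply/setP => w; rewrite !inE (same_connect incomp_connect_sym xy).
Qed.

Lemma cocomponent_sub x : x \in V -> cocomponent x \subset V.
Proof.
move=> xV; apply/subsetP => y; rewrite inE incomp_connect_sym => yx.
have [->//|/(connect_neq_edge yx) [z]] := eqVneq y x.
by case/and3P.
Qed.

Lemma cocomponent_comparable x x' y :
  x' \in cocomponent x -> x' \in V -> y \in V -> y \notin cocomponent x ->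
  le x' y || le y x'.
Proof.
rewrite inE => xx' x'V yV; apply: contraR; rewrite negb_or => /andP [nx'y nyx'].
by rewrite inE (connect_trans xx') // connect1 // /incomp_edge x'V yV nx'y nyx'.
Qed.

Lemma cocomponent_side x y : y \in V -> y \notin cocomponent x ->
  {in cocomponent x, forall x', (le x y -> le x' y) /\ (le y x -> le y x')}.
Proof.
move=> yV + x' /[!inE] /connectP [p xp ->]; elim: p x xp => [//|z p IHp] x /=.
case/andP=> xz zp ynx; have /and4P [_ zV nxz nzx] := xz.
have ynz : y \notin cocomponent z.
  by rewrite -(@cocomponent_eq x z z) ?cocomponent_id // inE connect1.
have [IHl IHr] := IHp z zp ynz.
have := cocomponent_comparable (cocomponent_id z) zV yV ynz.
case/orP=> [zy|yz]; split=> [xy|yx].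
- exact: IHl.
- by case/negP: nzx; apply: le_trans zy yx.
- by case/negP: nxz; apply: le_trans xy yz.
- exact: IHr.
Qed.

Lemma cocomponent_le x y : x \in V -> y \in V ->
  cocomponent x != cocomponent y -> le x y ->
  {in cocomponent x & cocomponent y, forall x' y', le x' y'}.
Proof.
move=> xV yV neq xy x' y' xx' yy'.
have ynx : y \notin cocomponent x.
  by apply: contra neq => yx; rewrite (cocomponent_eq yx (cocomponent_id y)).
have x'ny : x' \notin cocomponent y.
  by apply: contra neq => x'y; rewrite (cocomponent_eq xx' x'y).
have x'V : x' \in V by apply: subsetP (cocomponent_sub xV) _ xx'.
exact: (cocomponent_side x'V x'ny yy').2 ((cocomponent_side yV ynx xx').1 xy).
Qed.

Lemma cocomponents_chain : exists s : seq {set U},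
  [/\ uniq s, forall S, (S \in s) = (S \in cocomponents_of)
     & forall i x y, i.+1 < size s ->
         x \in nth set0 s i -> y \in nth set0 s i.+1 -> (x != y) && le x y].
Proof.
pose below (S S' : {set U}) := (S == S') || [forall x in S, forall y in S', le x y].
have below_total : {in cocomponents_of &, total below}.
  move=> _ _ /imsetP [x xV ->] /imsetP [y yV ->].
  have [->|neq] := eqVneq (cocomponent x) (cocomponent y); first by rewrite /below eqxx.
  have ynx : y \notin cocomponent x.
    by apply: contra neq => yx; rewrite (cocomponent_eq yx (cocomponent_id y)).
  rewrite /below (negPf neq) eq_sym (negPf neq) /=.
  case/orP: (cocomponent_comparable (cocomponent_id x) xV yV ynx) => [xy|yx].
    apply/orP; left; apply/forall_inP => x' xx'; apply/forall_inP => y' yy'.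
    exact: cocomponent_le xV yV neq xy x' y' xx' yy'.
  rewrite eq_sym in neq; apply/orP; right.
  apply/forall_inP => y' yy'; apply/forall_inP => x' xx'.
  exact: cocomponent_le yV xV neq yx y' x' yy' xx'.
set s := sort below (enum cocomponents_of).
have mem_s S : (S \in s) = (S \in cocomponents_of) by rewrite mem_sort mem_enum.
have uniq_s : uniq s by rewrite sort_uniq enum_uniq.
have /(sortedP set0) below_s : sorted below s.
  by apply: (sort_sorted_in below_total); apply/allP => S; rewrite mem_enum.
exists s; split=> // i x y lti xi yi.
have ltii : i < size s by apply: ltnW.
have neq : nth set0 s i != nth set0 s i.+1 by rewrite nth_uniq // neq_ltn ltnSn.
have := below_s i lti; rewrite /below (negPf neq).
move=> /forall_inP /(_ x xi) /forall_inP /(_ y yi) ->; rewrite andbT.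
apply: contra neq => /eqP eq_xy; rewrite -eq_xy in yi.
have /imsetP [u _ eu] : nth set0 s i \in cocomponents_of by rewrite -mem_s mem_nth.
have /imsetP [v _ ev] : nth set0 s i.+1 \in cocomponents_of by rewrite -mem_s mem_nth.
by rewrite eu ev (@cocomponent_eq u v x) -?eu -?ev.
Qed.

End Cocomponents.

Section Views.
Context {disp : Order.disp_t} {T : finPOrderType disp}.
Implicit Types a b c : T.

Lemma vle_trans : transitive (@vle _ T).
Proof.
move=> y x z /andP [xy1 xy2] /andP [yz1 yz2].
by apply/andP; split; [apply: subset_trans yz1 | apply: subset_trans xy2].
Qed.

Lemma vle_view a b :
  vle (view a) (view b) = (Dset a \subset Dset b) && (Uset b \subset Uset a).
Proof. by rewrite /vle /view /= !setCK. Qed.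

Lemma view_eqE a b : (view a == view b) = (Dset a == Dset b) && (Uset a == Uset b).
Proof. by rewrite xpair_eqE (inj_eq (@setC_inj _)). Qed.

Lemma approx_view a b : approx a b = (view a == view b).
Proof. by rewrite view_eqE. Qed.

Lemma topr_view a b : view a = view b -> topr a =1 topr b.
Proof. by move/eqP; rewrite view_eqE => /andP [/eqP Dab _] c; rewrite /topr Dab. Qed.

Lemma botr_view a b : view a = view b -> botr a =1 botr b.
Proof. by move/eqP; rewrite view_eqE => /andP [_ /eqP Uab] c; rewrite /botr Uab. Qed.

Lemma topr_sym : symmetric (@topr _ T).
Proof. by move=> a b; rewrite /topr andbC. Qed.

Lemma botr_sym : symmetric (@botr _ T).
Proof. by move=> a b; rewrite /botr andbC. Qed.

Lemma topr_irr : irreflexive (@topr _ T).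
Proof. by move=> a; rewrite /topr subxx. Qed.

Lemma botr_irr : irreflexive (@botr _ T).
Proof. by move=> a; rewrite /botr subxx. Qed.

Lemma untangledE a :
  untangled a = ~~ [exists b, topr a b] && ~~ [exists b, botr a b].
Proof.
by rewrite /untangled (notin_nontrivial_components topr_sym topr_irr)
  (notin_nontrivial_components botr_sym botr_irr).
Qed.

End Views.

Section ThreePlusOneFree.
Context {disp : Order.disp_t} {T : finPOrderType disp}.
Hypothesis free : @free31 disp T.
Implicit Types a b c : T.

Lemma Dset_or_Uset_subset a b : (Dset a \subset Dset b) || (Uset a \subset Uset b).
Proof.
apply/contraT; rewrite negb_or => /andP [/subsetPn [x] /[!inE] xa nxb].
case/subsetPn => y /[!inE] ay nby; have xy := lt_trans xa ay.
suff [] : False; apply: free; exists x, a, y, b; split=> //.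
all: rewrite /incomp /Order.comparable negb_or; apply/andP; split; apply/negP => h.
- by move: nby; rewrite (le_lt_trans h xy).
- by move: h nby; rewrite le_eqVlt (negPf nxb) orbF => /eqP <-; rewrite xy.
- by move: nby; rewrite (le_lt_trans h ay).
- by move: nxb; rewrite (lt_le_trans xa h).
- by move: h nxb; rewrite le_eqVlt (negPf nby) orbF => /eqP ->; rewrite xy.
- by move: nxb; rewrite (lt_le_trans xy h).
Qed.

Lemma topr_botr_excl a b c : topr a b -> botr a c -> False.
Proof.
case/andP=> nDab nDba /andP [nUac nUca].
have Uab : Uset a \subset Uset b by case/orP: (Dset_or_Uset_subset a b) nDab => ->.
have Dca : Dset c \subset Dset a by case/orP: (Dset_or_Uset_subset c a) nUca => ->.
case/orP: (Dset_or_Uset_subset b c) => [Dbc|Ubc].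
  by case/negP: nDba; apply: subset_trans Dbc Dca.
by case/negP: nUac; apply: subset_trans Uab Ubc.
Qed.

Lemma vinc_edge_view a b : vinc_edge (view a) (view b) = topr a b || botr a b.
Proof.
rewrite /vinc_edge !imset_f // !vle_view /topr /botr /=.
move: (Dset_or_Uset_subset a b) (Dset_or_Uset_subset b a).
by case: (Dset a \subset Dset b); case: (Dset b \subset Dset a);
   case: (Uset a \subset Uset b); case: (Uset b \subset Uset a).
Qed.

Local Notation vcomp a := (cocomponent views vle (view a)).

Lemma vpreim_tangle_cocomponent (r r' : rel T) a :
  (forall a b, vinc_edge (view a) (view b) = r a b || r' a b) ->
  (forall a b c, r a b -> r' a c -> False) ->
  symmetric r -> irreflexive r -> (forall a b, view a = view b -> r a =1 r b) ->
  [exists b, r a b] -> vpreim (vcomp a) = [set x | connect r a x].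
Proof.
move=> vinc_r excl r_sym r_irr r_view ra.
have r_tangled c : connect r a c -> [exists d, r c d].
  by move=> ac; rewrite -(component_neighbour r_sym r_irr ac).
apply/setP => x; rewrite !inE; apply/idP/idP => [ax | ax].
  pose A := [set view c | c in [set y | connect r a y]].
  have clA : closed vinc_edge (mem A).
    apply: intro_closed; first exact: sym_connect_sym (@incomp_edge_sym _ _ _).
    move=> u w uw /imsetP [c /[!inE] ac eu].
    have /and4P [_ /imsetP [c' _ ew] _ _] := uw.
    move: uw; rewrite eu ew vinc_r => /orP [cc'|r'cc'].
      by rewrite imset_f // inE (connect_trans ac) ?connect1.
    by have /existsP [d /excl /(_ r'cc')] := r_tangled c ac.
  have /imsetP [c /[!inE] ac /r_view xc] : view x \in A.
    by rewrite -(closed_connect clA ax) imset_f // inE.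
  have /existsP [d cd] := r_tangled c ac.
  rewrite (connect_trans ac) // (connect_trans (connect1 cd)) //.
  by rewrite connect1 // r_sym xc.
have clB : closed r [pred y | connect vinc_edge (view a) (view y)].
  apply: intro_closed; first exact: sym_connect_sym.
  by move=> y z yz /[!inE] ay; rewrite (connect_trans ay) // connect1 // vinc_r yz.
by have := closed_connect clB ax; rewrite !inE connect0.
Qed.

Lemma vpreim_untangled_cocomponent a :
  untangled a -> vpreim (vcomp a) = [set b | untangled b & approx a b].
Proof.
rewrite untangledE => /andP [nta nba].
have no_edge w : ~~ vinc_edge (view a) w.
  apply/negP => aw; have /and4P [_ /imsetP [c _ ec] _ _] := aw.
  move: aw; rewrite ec vinc_edge_view => /orP [ac|ac].
    by case/negP: nta; apply/existsP; exists c.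
  by case/negP: nba; apply/existsP; exists c.
apply/setP => x; rewrite !inE approx_view.
apply/idP/andP => [ax|[_ /eqP <-]]; last exact: connect0.
have ax' : view a = view x.
  by apply/eqP/contraT => /(connect_neq_edge ax) [w aw]; case/negP: (no_edge w).
rewrite ax' eqxx untangledE -(eq_existsb (topr_view ax')).
by rewrite -(eq_existsb (botr_view ax')) nta nba.
Qed.

Lemma vpreim_cocomponents :
  vpreim @: cocomponents = tops :|: bottoms :|: @clone_sets disp T.
Proof.
have vcompE a : [exists b, topr a b] -> vpreim (vcomp a) = [set x | connect topr a x].
  apply: vpreim_tangle_cocomponent topr_botr_excl topr_sym topr_irr topr_view.
  exact: vinc_edge_view.
have vcompE' a : [exists b, botr a b] -> vpreim (vcomp a) = [set x | connect botr a x].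
  apply: (vpreim_tangle_cocomponent (r' := topr)) botr_sym botr_irr botr_view.
  - by move=> b c; rewrite orbC vinc_edge_view.
  - by move=> b c d bc bd; apply: topr_botr_excl bd bc.
have vcomp_in a : vcomp a \in cocomponents.
  by apply/imsetP; exists (view a); rewrite ?imset_f.
apply/setP => X; rewrite !in_setU; apply/imsetP/idP.
  case=> _ /imsetP [_ /imsetP [a _ ->] ->] ->.
  have [ta|nta] := boolP [exists b, topr a b].
    rewrite vcompE // (_ : _ \in tops) //.
    by apply/(nontrivial_componentP topr_irr); exists a.
  have [ba|nba] := boolP [exists b, botr a b].
    rewrite vcompE' // (_ : _ \in bottoms) ?orbT //.
    by apply/(nontrivial_componentP botr_irr); exists a.
  have ua : untangled a by rewrite untangledE nta nba.
  by rewrite vpreim_untangled_cocomponent // imset_f ?orbT.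
case/orP => [/orP [] |].
- case/(nontrivial_componentP topr_irr) => a ta ->.
  by exists (vcomp a); rewrite ?vcomp_in ?vcompE.
- case/(nontrivial_componentP botr_irr) => a ba ->.
  by exists (vcomp a); rewrite ?vcomp_in ?vcompE'.
- case/imsetP => a ua ->.
  by exists (vcomp a); rewrite ?vcomp_in ?vpreim_untangled_cocomponent.
Qed.

End ThreePlusOneFree.

Unset Implicit Arguments.

Theorem proposition2p13 (disp : Order.disp_t) (T : finPOrderType disp) :
  @free31 disp T ->
  exists s : seq {set {set T} * {set T}},
    [/\ uniq s,
        (forall S, (S \in s) = (S \in @cocomponents disp T)),
        (forall i x y, (i.+1 < size s)%N ->
           x \in nth set0 s i -> y \in nth set0 s i.+1 -> vlt x y)
      & [set vpreim S | S in s] = tops :|: bottoms :|: @clone_sets disp T].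
Proof.
move=> free.
have [s [uniq_s mem_s chain_s]] := cocomponents_chain views (@vle_trans _ T).
exists s; split=> //; rewrite -(vpreim_cocomponents free).
apply/setP => X; apply/imsetP/imsetP => -[S Ss ->].
  by exists S; rewrite // -mem_s.
by exists S; rewrite // mem_s.
Qed.
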